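(* If $G$ is a quasitopological group, then $G$ and $\tau(G)$ have exactly the same open subgroups. In particular, for any based space $X$, $\pi_1^{qtop}(X)$ and $\pi_1^{\tau}(X)$ have the same open subgroups.
   Context: A quasitopological group is a group with a topology in which inversion is continuous and multiplication is separately continuous in each variable. $F_M(S)$ is the free (Markov) topological group on a space $S$. For a group with topology $G$, $\tau(G)$ is $G$ with the quotient topology with respect to the multiplication epimorphism $m_G:F_M(G)\to G$ sending each generator $g$ to $g$. For a based space $X$, $\pi_1^{qtop}(X)$ is $\pi_1(X)$ with the quotient topology from the based loop space $\Omega(X)$ (compact-open topology) via $\alpha\mapsto[\alpha]$; it is a quasitopological group. $\pi_1^{\tau}(X)=\tau(\pi_1^{qtop}(X))$. *)

From Stdlib Require Import Reals List Relations Classical ClassicalEpsilon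
  FunctionalExtensionality PropExtensionality.
Open Scope R_scope.

Set Implicit Arguments.

Definition is_topology {X : Type} (O : (X -> Prop) -> Prop) : Prop :=
  O (fun _ => True) /\
  (forall U V, O U -> O V -> O (fun x => U x /\ V x)) /\
  (forall F : (X -> Prop) -> Prop,
      (forall U, F U -> O U) -> O (fun x => exists U, F U /\ U x)).

Definition cont {X Y : Type} (OX : (X -> Prop) -> Prop)
  (OY : (Y -> Prop) -> Prop) (f : X -> Y) : Prop :=
  forall V, OY V -> OX (fun x => V (f x)).

Definition gen_open {X : Type} (B : (X -> Prop) -> Prop) (W : X -> Prop) : Prop :=
  forall O, is_topology O -> (forall V, B V -> O V) -> O W.

Definition prod_open {A B : Type} (OA : (A -> Prop) -> Prop)
  (OB : (B -> Prop) -> Prop) (W : A * B -> Prop) : Prop :=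
  forall a b, W (a, b) ->
    exists U V, OA U /\ OB V /\ U a /\ V b /\
      (forall a' b', U a' -> V b' -> W (a', b')).

Definition qt_compact {X : Type} (O : (X -> Prop) -> Prop) (K : X -> Prop) : Prop :=
  forall F : (X -> Prop) -> Prop,
    (forall U, F U -> O U) -> (forall x, K x -> exists U, F U /\ U x) ->
    exists l : list (X -> Prop),
      (forall U, In U l -> F U) /\ (forall x, K x -> exists U, In U l /\ U x).

Definition is_group {G : Type} (mul : G -> G -> G) (inv : G -> G) (e : G) : Prop :=
  (forall x y z, mul x (mul y z) = mul (mul x y) z) /\
  (forall x, mul e x = x /\ mul x e = x) /\
  (forall x, mul (inv x) x = e /\ mul x (inv x) = e).

Definition is_subgroup {G : Type} (mul : G -> G -> G) (inv : G -> G) (e : G)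
  (H : G -> Prop) : Prop :=
  H e /\ (forall x y, H x -> H y -> H (mul x y)) /\ (forall x, H x -> H (inv x)).

Definition is_quasitop_group {G : Type} (mul : G -> G -> G) (inv : G -> G) (e : G)
  (O : (G -> Prop) -> Prop) : Prop :=
  is_group mul inv e /\ is_topology O /\ cont O O inv /\
  (forall a, cont O O (fun x => mul a x)) /\ (forall a, cont O O (fun x => mul x a)).

Definition is_top_group {G : Type} (mul : G -> G -> G) (inv : G -> G) (e : G)
  (O : (G -> Prop) -> Prop) : Prop :=
  is_group mul inv e /\ is_topology O /\ cont O O inv /\
  cont (prod_open O O) O (fun p => mul (fst p) (snd p)).

(* words: (x,true) = x, (x,false) = x^-1 *)
Definition word (S : Type) := list (S * bool).

Inductive red1 {S : Type} : word S -> word S -> Prop :=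
| red1_intro : forall (u v : word S) x b,
    red1 (u ++ (x, b) :: (x, negb b) :: v) (u ++ v).

Definition weq {S : Type} : word S -> word S -> Prop := clos_refl_sym_trans _ red1.

(* F(S) = words modulo free reduction; elements are equivalence classes *)
Definition FG (S : Type) := { P : word S -> Prop | exists w, P = weq w }.

Definition fg_cls {S : Type} (w : word S) : FG S :=
  exist _ (weq w) (ex_intro _ w eq_refl).

Definition fg_rep {S : Type} (p : FG S) : word S :=
  proj1_sig (constructive_indefinite_description _ (proj2_sig p)).

Definition winv {S : Type} (w : word S) : word S :=
  rev (map (fun xb => (fst xb, negb (snd xb))) w).

Definition fg_mul {S : Type} (p q : FG S) : FG S := fg_cls (fg_rep p ++ fg_rep q).
Definition fg_inv {S : Type} (p : FG S) : FG S := fg_cls (winv (fg_rep p)).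
Definition fg_one {S : Type} : FG S := fg_cls nil.
Definition fg_sigma {S : Type} (x : S) : FG S := fg_cls ((x, true) :: nil).

(* F_M(S): F(S) with the finest group topology making sigma : S -> F(S)
   continuous, i.e. the topology generated by all such group topologies
   (the supremum of group topologies is a group topology). *)
Definition FM_open {S : Type} (OS : (S -> Prop) -> Prop) : (FG S -> Prop) -> Prop :=
  gen_open (fun V => exists T : (FG S -> Prop) -> Prop,
     is_top_group (@fg_mul S) (@fg_inv S) (@fg_one S) T /\ cont OS T (@fg_sigma S) /\ T V).

Definition word_eval {G : Type} (mul : G -> G -> G) (inv : G -> G) (e : G)
  (w : word G) : G :=
  fold_right (fun (xb : G * bool) (acc : G) => mul (if snd xb then fst xb else inv (fst xb)) acc) e w.

Definition m_G {G : Type} (mul : G -> G -> G) (inv : G -> G) (e : G)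
  (p : FG G) : G := word_eval mul inv e (fg_rep p).

(* open sets of tau(G): the quotient topology w.r.t. m_G *)
Definition tau_open {G : Type} (mul : G -> G -> G) (inv : G -> G) (e : G)
  (OG : (G -> Prop) -> Prop) (U : G -> Prop) : Prop :=
  FM_open OG (fun p => U (m_G mul inv e p)).

Definition R_open (U : R -> Prop) : Prop :=
  forall x, U x -> exists eps, eps > 0 /\ forall y, Rabs (y - x) < eps -> U y.

Definition II := { t : R | 0 <= t <= 1 }.

Definition I_open (V : II -> Prop) : Prop :=
  exists U, R_open U /\ forall t, V t <-> U (proj1_sig t).

Definition i0 : II := exist _ 0 (conj (Rle_refl 0) Rle_0_1).
Definition i1 : II := exist _ 1 (conj Rle_0_1 (Rle_refl 1)).

Lemma clamp_prf (r : R) : 0 <= Rmax 0 (Rmin 1 r) <= 1.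
Proof.
  split; [apply Rmax_l | apply Rmax_lub; [apply Rle_0_1 | apply Rmin_l]].
Qed.

Definition clamp (r : R) : II := exist _ (Rmax 0 (Rmin 1 r)) (clamp_prf r).

Section Pi1.
Context {X : Type} (OX : (X -> Prop) -> Prop) (x0 : X).

Definition is_loop (a : II -> X) : Prop := cont I_open OX a /\ a i0 = x0 /\ a i1 = x0.

Definition homotopic (a b : II -> X) : Prop :=
  exists H : II * II -> X, cont (prod_open I_open I_open) OX H /\
    (forall s, H (s, i0) = a s) /\ (forall s, H (s, i1) = b s) /\
    (forall t, H (i0, t) = x0 /\ H (i1, t) = x0).

Definition hcls (a : II -> X) : (II -> X) -> Prop := fun b => is_loop b /\ homotopic a b.

Definition Pi1 := { P : (II -> X) -> Prop | exists a, is_loop a /\ P = hcls a }.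

Definition const_loop : II -> X := fun _ => x0.

Lemma const_loop_is_loop : is_loop const_loop.
Proof.
  split; [| split; reflexivity].
  intros V _. exists (fun _ => V x0). split.
  - intros x H. exists 1. split; [apply Rlt_0_1 | intros; exact H].
  - intros t; unfold const_loop; tauto.
Qed.

(* class of a loop (of the constant loop if the argument is not a loop) *)
Definition pcls (a : II -> X) : Pi1 :=
  match excluded_middle_informative (is_loop a) with
  | left h => exist _ (hcls a) (ex_intro _ a (conj h eq_refl))
  | right _ => exist _ (hcls const_loop)
                 (ex_intro _ const_loop (conj const_loop_is_loop eq_refl))
  end.

Definition prep (p : Pi1) : II -> X :=
  proj1_sig (constructive_indefinite_description _ (proj2_sig p)).

Definition concat (a b : II -> X) : II -> X :=
  fun t => if Rle_dec (proj1_sig t) (1/2) then a (clamp (2 * proj1_sig t))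
           else b (clamp (2 * proj1_sig t - 1)).

Definition reverse (a : II -> X) : II -> X := fun t => a (clamp (1 - proj1_sig t)).

Definition pi1_mul (p q : Pi1) : Pi1 := pcls (concat (prep p) (prep q)).
Definition pi1_inv (p : Pi1) : Pi1 := pcls (reverse (prep p)).
Definition pi1_one : Pi1 := pcls const_loop.

Definition Omega := { a : II -> X | is_loop a }.

Definition CO_open : (Omega -> Prop) -> Prop :=
  gen_open (fun V => exists (K : II -> Prop) (U : X -> Prop),
     qt_compact I_open K /\ OX U /\
     V = (fun w : Omega => forall t, K t -> U (proj1_sig w t))).

(* pi_1^qtop: quotient topology from Omega via a |-> [a] *)
Definition qtop_open (V : Pi1 -> Prop) : Prop :=
  CO_open (fun w : Omega => V (pcls (proj1_sig w))).

End Pi1.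

From Pilot Require Import Defs.
From Stdlib Require Import Reals List Relations Classical ClassicalEpsilon.
From Stdlib Require Import Lra FunctionalExtensionality PropExtensionality ProofIrrelevance.

(* If [H] is an open subgroup of [G] and translations are continuous, the cosets
   [b (g1 H g1^-1 /\ ... /\ gn H gn^-1)] form the base of a group topology on [G]; pulled
   back along the multiplication homomorphism [m_G] it becomes a group topology on the free
   group in which the generators vary continuously, hence it is coarser than the Markov
   topology, and [m_G^-1(H)] is open in it: [H] is open in [tau(G)].  Conversely [G] embeds
   continuously in [F_M(G)] by the generators and [m_G] is a retraction of that embedding,
   so every [tau]-open set is open.

   For [pi_1^qtop] it then suffices that the loop classes form a group (every group law is
   witnessed by a straight-line homotopy of reparametrizations) and that concatenating a
   fixed loop on either side is continuous for the compact-open topology, which passes to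
   the quotient. *)

Lemma gen_open_topology {X : Type} (B : (X -> Prop) -> Prop) : is_topology (gen_open B).
Proof.
  split; [|split].
  - intros O [Htop _] _. exact Htop.
  - intros U V HU HV O [? [Hinter ?]] HB. apply Hinter; [apply HU | apply HV];
      repeat split; auto.
  - intros F HF O [? [? Hunion]] HB. apply Hunion. intros U HU. apply HF; repeat split; auto.
Qed.

Lemma gen_open_base {X : Type} (B : (X -> Prop) -> Prop) (V : X -> Prop) :
  B V -> gen_open B V.
Proof. intros HV O _ HB. auto. Qed.

Lemma open_ext {X : Type} (O : (X -> Prop) -> Prop) (U V : X -> Prop) :
  (forall x, U x <-> V x) -> O U -> O V.
Proof.
  intros HUV HU. replace V with U; auto.
  apply functional_extensionality; intro x; apply propositional_extensionality; auto.
Qed.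

Lemma preimage_topology {X Y : Type} (OX : (X -> Prop) -> Prop) (f : X -> Y) :
  is_topology OX -> is_topology (fun V : Y -> Prop => OX (fun x => V (f x))).
Proof.
  intros [Htop [Hinter Hunion]]; split; [|split].
  - exact Htop.
  - intros U V HU HV. exact (Hinter _ _ HU HV).
  - intros F HF.
    apply (open_ext OX (fun x => exists W, (exists U, F U /\ W = (fun x => U (f x))) /\ W x)).
    + intros x; split.
      * intros [W [[U [HU ->]] HW]]. eauto.
      * intros [U [HU HUx]]. exists (fun x => U (f x)). eauto.
    + apply Hunion. intros W [U [HU ->]]. auto.
Qed.

Lemma cont_gen_open {X Y : Type} (OX : (X -> Prop) -> Prop) (B : (Y -> Prop) -> Prop)
  (f : X -> Y) :
  is_topology OX -> (forall V, B V -> OX (fun x => V (f x))) -> cont OX (gen_open B) f.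
Proof. intros HT HB V HV. exact (HV _ (preimage_topology OX f HT) HB). Qed.

Lemma cont_comp {X Y Z : Type} (OX : (X -> Prop) -> Prop) (OY : (Y -> Prop) -> Prop)
  (OZ : (Z -> Prop) -> Prop) (f : X -> Y) (g : Y -> Z) :
  cont OX OY f -> cont OY OZ g -> cont OX OZ (fun x => g (f x)).
Proof. intros Hf Hg V HV. exact (Hf _ (Hg V HV)). Qed.

Lemma open_local {X : Type} (O : (X -> Prop) -> Prop) (W : X -> Prop) :
  is_topology O -> (forall x, W x -> exists U, O U /\ U x /\ forall y, U y -> W y) -> O W.
Proof.
  intros [_ [_ Hunion]] Hloc.
  apply (open_ext O (fun x => exists U, (O U /\ forall y, U y -> W y) /\ U x)).
  - intro x; split.
    + intros [U [[_ HUW] Ux]]; auto.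
    + intros Wx. destruct (Hloc x Wx) as [U [HU [Ux HUW]]]. exists U; auto.
  - apply Hunion. intros U [HU _]; auto.
Qed.

Lemma open_empty {X : Type} (O : (X -> Prop) -> Prop) : is_topology O -> O (fun _ => False).
Proof.
  intros [_ [_ Hunion]].
  apply (open_ext O (fun x => exists U, False /\ U x)); [firstorder|].
  apply Hunion. contradiction.
Qed.

Lemma open_list_inter {X A : Type} (O : (X -> Prop) -> Prop) (P : A -> X -> Prop)
  (l : list A) :
  is_topology O -> (forall a, O (P a)) -> O (fun x => forall a, In a l -> P a x).
Proof.
  intros HT HP. induction l as [|a l IH].
  - apply (open_ext O (fun _ => True)); [|apply HT]. intros x; split; auto. intros _ a [].
  - apply (open_ext O (fun x => P a x /\ forall b, In b l -> P b x)); [|apply HT; auto].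
    intros x; split.
    + intros [Ha Hl] b [<-|Hb]; auto.
    + intros Hx; split; [apply Hx; left | intros b Hb; apply Hx; right]; auto.
Qed.

Section FreeGroup.
Variable S : Type.

Lemma weq_refl (u : word S) : weq u u. Proof. apply rst_refl. Qed.
Lemma weq_sym (u v : word S) : weq u v -> weq v u. Proof. apply rst_sym. Qed.
Lemma weq_trans (u v w : word S) : weq u v -> weq v w -> weq u w. Proof. apply rst_trans. Qed.

Lemma weq_catl (u v w : word S) : weq u v -> weq (w ++ u) (w ++ v).
Proof.
  induction 1 as [u v []| | |]; eauto using weq_refl, weq_sym, weq_trans.
  apply rst_step. rewrite !app_assoc. constructor.
Qed.

Lemma weq_catr (u v w : word S) : weq u v -> weq (u ++ w) (v ++ w).
Proof.
  induction 1 as [u v []| | |]; eauto using weq_refl, weq_sym, weq_trans.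
  apply rst_step. rewrite <- !app_assoc. constructor.
Qed.

Lemma weq_cat (u u' v v' : word S) : weq u u' -> weq v v' -> weq (u ++ v) (u' ++ v').
Proof. intros; eapply weq_trans; [apply weq_catr | apply weq_catl]; eauto. Qed.

Lemma fg_cls_eq (u v : word S) : weq u v -> fg_cls u = fg_cls v.
Proof.
  intros Huv. apply eq_sig_hprop; [intros; apply proof_irrelevance|]. simpl.
  apply functional_extensionality; intro w; apply propositional_extensionality.
  split; intros; eauto using weq_trans, weq_sym.
Qed.

Lemma fg_rep_spec (p : FG S) : proj1_sig p = weq (fg_rep p).
Proof. unfold fg_rep. destruct (constructive_indefinite_description _ _); auto. Qed.

Lemma fg_cls_rep (p : FG S) : fg_cls (fg_rep p) = p.
Proof.
  apply eq_sig_hprop; [intros; apply proof_irrelevance|]. symmetry. apply fg_rep_spec.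
Qed.

Lemma fg_rep_cls (u : word S) : weq (fg_rep (fg_cls u)) u.
Proof.
  pose proof (fg_rep_spec (fg_cls u)) as Hrep. simpl in Hrep.
  apply weq_sym. rewrite Hrep. apply weq_refl.
Qed.

Lemma winvK (w : word S) : winv (winv w) = w.
Proof.
  unfold winv. rewrite map_rev, rev_involutive, map_map. rewrite <- map_id.
  apply map_ext. intros [x b]. simpl. rewrite Bool.negb_involutive. reflexivity.
Qed.

Lemma winv_cancel (w : word S) : weq (winv w ++ w) nil.
Proof.
  induction w as [|[x b] w IH]; [apply weq_refl|].
  change (winv ((x, b) :: w)) with (winv w ++ (x, negb b) :: nil).
  rewrite <- app_assoc. eapply weq_trans; [|exact IH].
  apply rst_step. pose proof (red1_intro (winv w) w x (negb b)) as Hred.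
  rewrite Bool.negb_involutive in Hred. exact Hred.
Qed.

Lemma fg_group : is_group (@fg_mul S) (@fg_inv S) (@fg_one S).
Proof.
  split; [|split].
  - intros p q r. apply fg_cls_eq.
    eapply weq_trans; [apply weq_catl, fg_rep_cls|].
    eapply weq_trans; [|apply weq_catr, weq_sym, fg_rep_cls].
    rewrite app_assoc. apply weq_refl.
  - intros p; split; rewrite <- (fg_cls_rep p) at 2; apply fg_cls_eq.
    + apply (weq_cat _ nil _ _ (fg_rep_cls nil) (weq_refl _)).
    + rewrite <- (app_nil_r (fg_rep p)) at 2. apply weq_cat; [apply weq_refl | apply fg_rep_cls].
  - intros p; split; apply fg_cls_eq.
    + eapply weq_trans; [apply weq_catr, fg_rep_cls | apply winv_cancel].
    + eapply weq_trans; [apply weq_catl, fg_rep_cls|].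
      rewrite <- (winvK (fg_rep p)) at 1. apply winv_cancel.
Qed.

End FreeGroup.

Section QuasitopologicalGroup.
Variables (G : Type) (mul : G -> G -> G) (inv : G -> G) (e : G).
Hypothesis HG : is_group mul inv e.

Lemma mulgA x y z : mul x (mul y z) = mul (mul x y) z. Proof. apply HG. Qed.
Lemma mul1g x : mul e x = x. Proof. apply HG. Qed.
Lemma mulg1 x : mul x e = x. Proof. apply HG. Qed.
Lemma mulVg x : mul (inv x) x = e. Proof. apply HG. Qed.
Lemma mulgV x : mul x (inv x) = e. Proof. apply HG. Qed.

Lemma mulKg x y : mul (inv x) (mul x y) = y.
Proof. rewrite mulgA, mulVg, mul1g. reflexivity. Qed.

Lemma mulKVg x y : mul x (mul (inv x) y) = y.
Proof. rewrite mulgA, mulgV, mul1g. reflexivity. Qed.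

Lemma invg_unique x y : mul x y = e -> y = inv x.
Proof. intros Hxy. rewrite <- (mulKg x y), Hxy, mulg1. reflexivity. Qed.

Lemma invgK x : inv (inv x) = x.
Proof. symmetry. apply invg_unique, mulVg. Qed.

Lemma invgM x y : inv (mul x y) = mul (inv y) (inv x).
Proof.
  symmetry; apply invg_unique.
  rewrite <- mulgA, (mulgA y), mulgV, mul1g, mulgV. reflexivity.
Qed.

Notation eval := (word_eval mul inv e).
Notation m := (m_G mul inv e).

Lemma word_eval_cat u v : eval (u ++ v) = mul (eval u) (eval v).
Proof.
  induction u as [|[x b] u IH]; simpl; rewrite ?IH, ?mul1g, ?mulgA; reflexivity.
Qed.

Lemma word_eval_weq u v : weq u v -> eval u = eval v.
Proof.
  induction 1 as [u v []| | |]; [|reflexivity|congruence|congruence].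
  rewrite !word_eval_cat. simpl. f_equal.
  destruct b; simpl; [apply mulKVg | apply mulKg].
Qed.

Lemma m_G_cls u : m (fg_cls u) = eval u.
Proof. apply word_eval_weq, fg_rep_cls. Qed.

Lemma m_G_mul p q : m (fg_mul p q) = mul (m p) (m q).
Proof. unfold fg_mul. rewrite m_G_cls. apply word_eval_cat. Qed.

Lemma m_G_inv p : m (fg_inv p) = inv (m p).
Proof.
  apply invg_unique. rewrite <- m_G_mul, (proj2 (proj2 (proj2 (fg_group G)) p)).
  unfold fg_one. rewrite m_G_cls. reflexivity.
Qed.

Lemma m_G_sigma x : m (fg_sigma x) = x.
Proof. unfold fg_sigma. rewrite m_G_cls. apply mulg1. Qed.

Variable OG : (G -> Prop) -> Prop.
Hypothesis HT : is_topology OG.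

Lemma fg_sigma_cont : cont OG (FM_open OG) (@fg_sigma G).
Proof. apply cont_gen_open; auto. intros V [T [_ [Hsigma HV]]]. auto. Qed.

Lemma tau_open_open U : tau_open mul inv e OG U -> OG U.
Proof.
  intros HU. apply (open_ext OG (fun x => U (m (fg_sigma x)))).
  - intros x. rewrite m_G_sigma. reflexivity.
  - exact (fg_sigma_cont _ HU).
Qed.

Hypothesis HL : forall a, cont OG OG (fun x => mul a x).
Hypothesis HR : forall a, cont OG OG (fun x => mul x a).

Section OpenSubgroup.
Variable H : G -> Prop.
Hypotheses (HH : is_subgroup mul inv e H) (HO : OG H).

Let subg1 : H e := proj1 HH.
Let subgM : forall x y, H x -> H y -> H (mul x y) := proj1 (proj2 HH).
Let subgV : forall x, H x -> H (inv x) := proj2 (proj2 HH).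

(* The left coset [b (g H g^-1)] of a conjugate of [H]. *)
Definition conj_coset (b g : G) : G -> Prop := fun a => H (mul (inv (mul b g)) (mul a g)).

Lemma conj_coset_refl b g : conj_coset b g b.
Proof. unfold conj_coset. rewrite mulVg. exact subg1. Qed.

Lemma conj_coset_trans a b c g : conj_coset b g a -> conj_coset c g b -> conj_coset c g a.
Proof.
  unfold conj_coset; intros Hab Hbc.
  replace (mul (inv (mul c g)) (mul a g)) with
    (mul (mul (inv (mul c g)) (mul b g)) (mul (inv (mul b g)) (mul a g))); auto.
  rewrite <- mulgA, mulKVg. reflexivity.
Qed.

(* Pull back along [m_G] the group topology on [G] whose neighbourhoods of [b] are the
   finite intersections of the cosets [b (g H g^-1)]. *)
Definition conj_coset_open (U : FG G -> Prop) : Prop :=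
  forall p, U p -> exists l, forall q, (forall g, In g l -> conj_coset (m p) g (m q)) -> U q.

Lemma conj_coset_open_basic p l :
  conj_coset_open (fun q => forall g, In g l -> conj_coset (m p) g (m q)).
Proof.
  intros p' Hp'. exists l. intros q Hq g Hg. eapply conj_coset_trans; eauto.
Qed.

Lemma conj_coset_open_topology : is_topology conj_coset_open.
Proof.
  split; [|split].
  - intros p _. exists nil; auto.
  - intros U V HU HV p [Up Vp].
    destruct (HU p Up) as [l1 Hl1], (HV p Vp) as [l2 Hl2].
    exists (l1 ++ l2). intros q Hq; split; [apply Hl1 | apply Hl2];
      intros g Hg; apply Hq, in_or_app; auto.
  - intros F HF p [U [FU Up]]. destruct (HF U FU p Up) as [l Hl].
    exists l. intros q Hq. exists U; auto.
Qed.

Lemma conj_coset_open_inv : cont conj_coset_open conj_coset_open (@fg_inv G).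
Proof.
  intros V HV p Vp. destruct (HV _ Vp) as [l Hl].
  exists (map (fun g => mul (inv (m p)) g) l). intros q Hq. apply Hl.
  intros g Hg. specialize (Hq _ (in_map _ _ _ Hg)). apply subgV in Hq.
  unfold conj_coset in *. rewrite !m_G_inv.
  replace (mul (inv (mul (inv (m p)) g)) (mul (inv (m q)) g)) with
    (inv (mul (inv (mul (m p) (mul (inv (m p)) g))) (mul (m q) (mul (inv (m p)) g)))); auto.
  rewrite !invgM, !invgK, mulKVg, <- !mulgA. reflexivity.
Qed.

Lemma conj_coset_open_mul :
  cont (prod_open conj_coset_open conj_coset_open) conj_coset_open
    (fun pq => fg_mul (fst pq) (snd pq)).
Proof.
  intros V HV a b Vab. simpl in Vab. destruct (HV _ Vab) as [l Hl].
  exists (fun p => forall g, In g (map (fun g => mul (m b) g) l) -> conj_coset (m a) g (m p)).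
  exists (fun q => forall g, In g l -> conj_coset (m b) g (m q)).
  split; [apply conj_coset_open_basic|split; [apply conj_coset_open_basic|]].
  split; [intros; apply conj_coset_refl|split; [intros; apply conj_coset_refl|]].
  intros p q Hp Hq. simpl. apply Hl. intros g Hg.
  specialize (Hq g Hg). specialize (Hp _ (in_map _ _ _ Hg)).
  unfold conj_coset in *. rewrite !m_G_mul in *.
  replace (mul (inv (mul (mul (m a) (m b)) g)) (mul (mul (m p) (m q)) g)) with
    (mul (mul (inv (mul (m a) (mul (m b) g))) (mul (m p) (mul (m b) g)))
         (mul (inv (mul (m b) g)) (mul (m q) g))); auto.
  rewrite !invgM, <- !mulgA, (mulKVg g), (mulKVg (m b)). reflexivity.
Qed.

Lemma conj_coset_open_top_group :
  is_top_group (@fg_mul G) (@fg_inv G) (@fg_one G) conj_coset_open.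
Proof.
  split; [apply fg_group|].
  split; [apply conj_coset_open_topology|].
  split; [apply conj_coset_open_inv | apply conj_coset_open_mul].
Qed.

(* Each [b (g H g^-1)] is a translate of the open set [H]. *)
Lemma conj_coset_open_sigma : cont OG conj_coset_open (@fg_sigma G).
Proof.
  intros V HV. apply open_local; auto. intros x Vx.
  destruct (HV _ Vx) as [l Hl].
  exists (fun y => forall g, In g l -> conj_coset x g y). split; [|split].
  - apply open_list_inter; auto. intros g. exact (HR g _ (HL (inv (mul x g)) _ HO)).
  - intros; apply conj_coset_refl.
  - intros y Hy. apply Hl. rewrite !m_G_sigma. exact Hy.
Qed.

Lemma open_subgroup_tau_open : tau_open mul inv e OG H.
Proof.
  intros O HOt HB. apply HB. exists conj_coset_open.
  split; [apply conj_coset_open_top_group|split; [apply conj_coset_open_sigma|]].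
  intros p Hp. exists (e :: nil). intros q Hq. specialize (Hq e (or_introl eq_refl)).
  unfold conj_coset in Hq. rewrite !mulg1 in Hq.
  rewrite <- (mulKVg (m p) (m q)). exact (subgM _ _ Hp Hq).
Qed.

End OpenSubgroup.

Lemma open_subgroupE H : is_subgroup mul inv e H -> (OG H <-> tau_open mul inv e OG H).
Proof.
  intros HH; split; [apply open_subgroup_tau_open; auto | apply tau_open_open].
Qed.

End QuasitopologicalGroup.

Lemma cont_prod_pair {X A B : Type} (OX : (X -> Prop) -> Prop) (OA : (A -> Prop) -> Prop)
  (OB : (B -> Prop) -> Prop) (f : X -> A) (g : X -> B) :
  is_topology OX -> cont OX OA f -> cont OX OB g ->
  cont OX (prod_open OA OB) (fun x => (f x, g x)).
Proof.
  intros HX Hf Hg W HW. apply open_local; auto. intros x Wx.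
  destruct (HW _ _ Wx) as [U [V [HU [HV [Ux [Vx HUV]]]]]].
  exists (fun y => U (f y) /\ V (g y)). split; [apply HX; auto|]. split; auto.
  intros y [Uy Vy]. auto.
Qed.

Lemma cont_fst {A B : Type} (OA : (A -> Prop) -> Prop) (OB : (B -> Prop) -> Prop) :
  is_topology OB -> cont (prod_open OA OB) OA fst.
Proof.
  intros HB U HU a b Ua. exists U, (fun _ => True). repeat split; auto. apply HB.
Qed.

Lemma cont_snd {A B : Type} (OA : (A -> Prop) -> Prop) (OB : (B -> Prop) -> Prop) :
  is_topology OA -> cont (prod_open OA OB) OB snd.
Proof.
  intros HA V HV a b Vb. exists (fun _ => True), V. repeat split; auto. apply HA.
Qed.

Lemma prod_open_topology {A B : Type} (OA : (A -> Prop) -> Prop) (OB : (B -> Prop) -> Prop) :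
  is_topology OA -> is_topology OB -> is_topology (prod_open OA OB).
Proof.
  intros HA HB. split; [|split].
  - intros a b _. exists (fun _ => True), (fun _ => True). repeat split; auto; [apply HA|apply HB].
  - intros W1 W2 HW1 HW2 a b [W1ab W2ab].
    destruct (HW1 a b W1ab) as [U1 [V1 [HU1 [HV1 [U1a [V1b H1]]]]]].
    destruct (HW2 a b W2ab) as [U2 [V2 [HU2 [HV2 [U2a [V2b H2]]]]]].
    exists (fun x => U1 x /\ U2 x), (fun y => V1 y /\ V2 y).
    split; [apply HA; auto|]. split; [apply HB; auto|].
    repeat split; firstorder.
  - intros F HF a b [W [FW Wab]].
    destruct (HF W FW a b Wab) as [U [V [HU [HV [Ua [Vb HUV]]]]]].
    exists U, V. repeat split; auto. intros a' b' Ua' Vb'. exists W; auto.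
Qed.

Lemma cont_paste {X Y : Type} (OX : (X -> Prop) -> Prop) (OY : (Y -> Prop) -> Prop)
  (c : X -> R) (r : R) (F1 F2 : X -> Y) :
  is_topology OX -> OX (fun x => c x < r) -> OX (fun x => r < c x) ->
  cont OX OY F1 -> cont OX OY F2 -> (forall x, c x = r -> F1 x = F2 x) ->
  cont OX OY (fun x => if Rle_dec (c x) r then F1 x else F2 x).
Proof.
  intros HX Hlt Hgt H1 H2 Hr V HV. apply open_local; auto. intros x Vx.
  destruct (Rtotal_order (c x) r) as [Hx|[Hx|Hx]].
  - exists (fun y => c y < r /\ V (F1 y)). split; [apply HX; auto|].
    destruct (Rle_dec (c x) r); [|lra]. split; auto.
    intros y [Hy Vy]. destruct (Rle_dec (c y) r); [auto|lra].
  - exists (fun y => V (F1 y) /\ V (F2 y)). split; [apply HX; auto|].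
    destruct (Rle_dec (c x) r); [|lra]. rewrite <- (Hr x Hx). split; auto.
    intros y [Vy1 Vy2]. destruct (Rle_dec (c y) r); auto.
  - exists (fun y => r < c y /\ V (F2 y)). split; [apply HX; auto|].
    destruct (Rle_dec (c x) r); [lra|]. split; auto.
    intros y [Hy Vy]. destruct (Rle_dec (c y) r); [lra|auto].
Qed.

Lemma list_filter_prop {A : Type} (P : A -> Prop) (l : list A) :
  exists l', forall x, In x l' <-> In x l /\ P x.
Proof.
  induction l as [|a l [l' Hl']]; [exists nil; simpl; tauto|].
  destruct (classic (P a)) as [Pa|nPa]; [exists (a :: l') | exists l'];
    intros x; simpl; rewrite Hl'; intuition congruence.
Qed.

Lemma list_finite_choice {A B : Type} (Rel : A -> B -> Prop) (l : list A) :
  (forall a, In a l -> exists b, Rel a b) ->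
  exists l', (forall b, In b l' -> exists a, Rel a b) /\
             (forall a, In a l -> exists b, In b l' /\ Rel a b).
Proof.
  induction l as [|a l IH]; intros Hl.
  - exists nil. simpl. tauto.
  - destruct IH as [l' [H1 H2]]; [intros; apply Hl; right; auto|].
    destruct (Hl a (or_introl eq_refl)) as [b Hab].
    exists (b :: l'). split.
    + intros b' [<-|Hb']; eauto.
    + intros a' [<-|Ha']; [exists b; simpl; auto|].
      destruct (H2 a' Ha') as [b' [Hb' Hab']]. exists b'; simpl; auto.
Qed.

Lemma compact_inter_closed {X : Type} (O : (X -> Prop) -> Prop) (K D : X -> Prop) :
  qt_compact O K -> O D -> qt_compact O (fun x => K x /\ ~ D x).
Proof.
  intros HK HD F HF Hcov.
  destruct (HK (fun U => F U \/ U = D)) as [l [Hl1 Hl2]].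
  - intros U [HU| ->]; auto.
  - intros x Kx. destruct (classic (D x)) as [Dx|nDx]; [exists D; auto|].
    destruct (Hcov x (conj Kx nDx)) as [U [FU Ux]]. exists U; auto.
  - destruct (list_filter_prop F l) as [l' Hl']. exists l'. split.
    + intros U HU. apply Hl', HU.
    + intros x [Kx nDx]. destruct (Hl2 x Kx) as [U [HU Ux]].
      exists U. split; auto. apply Hl'. split; auto.
      destruct (Hl1 U HU) as [FU| ->]; tauto.
Qed.

Lemma compact_image {X Y : Type} (OX : (X -> Prop) -> Prop) (OY : (Y -> Prop) -> Prop)
  (K : X -> Prop) (f : X -> Y) :
  qt_compact OX K -> cont OX OY f -> qt_compact OY (fun y => exists x, K x /\ y = f x).
Proof.
  intros HK Hf F HF Hcov.
  destruct (HK (fun W => exists U, F U /\ W = (fun x => U (f x)))) as [l [Hl1 Hl2]].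
  - intros W [U [FU ->]]. apply Hf; auto.
  - intros x Kx. destruct (Hcov (f x) (ex_intro _ x (conj Kx eq_refl))) as [U [FU Ux]].
    exists (fun x => U (f x)). split; eauto.
  - destruct (list_finite_choice (fun W U => F U /\ W = (fun x => U (f x))) l Hl1)
      as [l' [H1 H2]].
    exists l'. split.
    + intros U HU. destruct (H1 U HU) as [W [FU _]]. exact FU.
    + intros y [x [Kx ->]]. destruct (Hl2 x Kx) as [W [HW Wx]].
      destruct (H2 W HW) as [U [HU [_ ->]]]. eauto.
Qed.

Definition val (t : II) : R := proj1_sig t.

Lemma val_bound t : 0 <= val t <= 1. Proof. exact (proj2_sig t). Qed.

Lemma val_inj s t : val s = val t -> s = t.
Proof. intros Hst. apply eq_sig_hprop; auto. intros; apply proof_irrelevance. Qed.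

Lemma clamp_cases r : (r <= 0 /\ proj1_sig (clamp r) = 0) \/
  (0 <= r <= 1 /\ proj1_sig (clamp r) = r) \/ (1 <= r /\ proj1_sig (clamp r) = 1).
Proof. simpl. unfold Rmax, Rmin. repeat destruct Rle_dec; lra. Qed.

Lemma Rmin_cases x y : (x <= y /\ Rmin x y = x) \/ (y <= x /\ Rmin x y = y).
Proof. unfold Rmin; destruct Rle_dec; [left|right]; split; lra. Qed.

Lemma Rmax_cases x y : (x <= y /\ Rmax x y = y) \/ (y <= x /\ Rmax x y = x).
Proof. unfold Rmax; destruct Rle_dec; [left|right]; split; lra. Qed.

Lemma Rabs_cases x : (0 <= x /\ Rabs x = x) \/ (x <= 0 /\ Rabs x = - x).
Proof. unfold Rabs; destruct Rcase_abs; [right|left]; split; lra. Qed.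

Ltac interval_lra := unfold val, i0, i1 in *; cbn [proj1_sig fst snd] in *;
  repeat (match goal with
   | |- context [proj1_sig (clamp ?r)] =>
       let E := fresh in destruct (clamp_cases r) as [[? E]|[[? E]|[? E]]]; rewrite E in *; clear E
   | H : context [proj1_sig (clamp ?r)] |- _ =>
       let E := fresh in destruct (clamp_cases r) as [[? E]|[[? E]|[? E]]]; rewrite E in *; clear E
   | |- context [Rmin ?x ?y] =>
       let E := fresh in destruct (Rmin_cases x y) as [[? E]|[? E]]; rewrite E in *; clear E
   | H : context [Rmin ?x ?y] |- _ =>
       let E := fresh in destruct (Rmin_cases x y) as [[? E]|[? E]]; rewrite E in *; clear E
   | |- context [Rmax ?x ?y] =>
       let E := fresh in destruct (Rmax_cases x y) as [[? E]|[? E]]; rewrite E in *; clear E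
   | H : context [Rmax ?x ?y] |- _ =>
       let E := fresh in destruct (Rmax_cases x y) as [[? E]|[? E]]; rewrite E in *; clear E
   | |- context [Rabs ?x] =>
       let E := fresh in destruct (Rabs_cases x) as [[? E]|[? E]]; rewrite E in *; clear E
   | H : context [Rabs ?x] |- _ =>
       let E := fresh in destruct (Rabs_cases x) as [[? E]|[? E]]; rewrite E in *; clear E
   end; try (exfalso; lra)); lra.

Lemma clamp_val t : clamp (val t) = t.
Proof. apply val_inj. pose proof (val_bound t). interval_lra. Qed.

Lemma clamp_lipschitz r r' : Rabs (val (clamp r') - val (clamp r)) <= Rabs (r' - r).
Proof. interval_lra. Qed.

Lemma I_open_metric V : I_open V <->
  (forall t, V t -> exists d, d > 0 /\ forall t', Rabs (val t' - val t) < d -> V t').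
Proof.
  split.
  - intros [U [HU HV]] t Vt. apply HV in Vt. destruct (HU _ Vt) as [d [Hd Hd']].
    exists d; split; auto. intros t' Ht'. apply HV, Hd', Ht'.
  - intros Hmet.
    exists (fun r => exists t d, d > 0 /\ Rabs (r - val t) < d /\
                     forall t', Rabs (val t' - val t) < d -> V t').
    split.
    + intros r [t [d [Hd [Hr Ht]]]]. exists (d - Rabs (r - val t)). split; [lra|].
      intros y Hy. exists t, d. repeat split; auto.
      pose proof (Rabs_triang (y - r) (r - val t)).
      replace (y - r + (r - val t)) with (y - val t) in * by ring. lra.
    + intros t; split.
      * intros Vt. destruct (Hmet t Vt) as [d [Hd Hd']]. exists t, d.
        repeat split; auto. interval_lra.
      * intros [t' [d [Hd [Hr Ht]]]]. apply Ht, Hr.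
Qed.

Lemma I_open_topology : is_topology I_open.
Proof.
  split; [|split]; intros; apply I_open_metric.
  - intros t _. exists 1. split; [lra | auto].
  - intros t [Ut Vt].
    destruct (proj1 (I_open_metric U) H t Ut) as [d1 [Hd1 H1]].
    destruct (proj1 (I_open_metric V) H0 t Vt) as [d2 [Hd2 H2]].
    exists (Rmin d1 d2). split; [interval_lra|].
    intros t' Ht'. split; [apply H1 | apply H2]; interval_lra.
  - intros t [U [FU Ut]].
    destruct (proj1 (I_open_metric U) (H U FU) t Ut) as [d [Hd Hd']].
    exists d. split; auto. intros t' Ht'. exists U; auto.
Qed.

Lemma I_open_ball t d : I_open (fun t' => Rabs (val t' - val t) < d).
Proof.
  apply I_open_metric. intros t' Ht'. exists (d - Rabs (val t' - val t)).
  split; [lra|]. intros t'' Ht''.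
  pose proof (Rabs_triang (val t'' - val t') (val t' - val t)).
  replace (val t'' - val t' + (val t' - val t)) with (val t'' - val t) in * by ring. lra.
Qed.

Lemma I_open_val_lt r : I_open (fun t => val t < r).
Proof.
  apply I_open_metric. intros t Ht. exists (r - val t). split; [lra|]. intros; interval_lra.
Qed.

Lemma I_open_val_gt r : I_open (fun t => r < val t).
Proof.
  apply I_open_metric. intros t Ht. exists (val t - r). split; [lra|]. intros; interval_lra.
Qed.

Notation II2_open := (prod_open I_open I_open).

Lemma II2_open_topology : is_topology II2_open.
Proof. apply prod_open_topology; apply I_open_topology. Qed.

Definition lipschitz1 (u : R -> R) (L : R) : Prop :=
  0 <= L /\ forall s s', 0 <= s <= 1 -> 0 <= s' <= 1 -> Rabs (u s' - u s) <= L * Rabs (s' - s).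

Definition lipschitz2 (u : R -> R -> R) (L : R) : Prop :=
  0 <= L /\ forall s t s' t', 0 <= s <= 1 -> 0 <= s' <= 1 -> 0 <= t <= 1 -> 0 <= t' <= 1 ->
    Rabs (u s' t' - u s t) <= L * Rabs (s' - s) + L * Rabs (t' - t).

Lemma cont_clamp_lipschitz1 u L :
  lipschitz1 u L -> cont I_open I_open (fun t => clamp (u (val t))).
Proof.
  intros [HL Hu] V HV. apply I_open_metric. intros t Vt.
  destruct (proj1 (I_open_metric V) HV _ Vt) as [eps [He Heps]].
  exists (eps / (L + 1)). split; [apply Rdiv_lt_0_compat; lra|].
  intros t' Ht'. apply Heps.
  eapply Rle_lt_trans; [apply clamp_lipschitz|].
  eapply Rle_lt_trans; [apply Hu; apply val_bound|].
  apply (Rmult_lt_compat_r (L + 1)) in Ht'; [|lra].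
  replace (eps / (L + 1) * (L + 1)) with eps in Ht' by (field; lra).
  pose proof (Rabs_pos (val t' - val t)). nra.
Qed.

Lemma cont_clamp_lipschitz2 u L :
  lipschitz2 u L -> cont II2_open I_open (fun p => clamp (u (val (fst p)) (val (snd p)))).
Proof.
  intros [HL Hu] V HV s t Vst.
  destruct (proj1 (I_open_metric V) HV _ Vst) as [eps [He Heps]].
  set (d := eps / (2 * L + 1)).
  assert (Hd : d > 0) by (apply Rdiv_lt_0_compat; lra).
  exists (fun s' => Rabs (val s' - val s) < d), (fun t' => Rabs (val t' - val t) < d).
  split; [apply I_open_ball|]. split; [apply I_open_ball|].
  split; [interval_lra|]. split; [interval_lra|].
  intros s' t' Hs Ht. apply Heps. simpl.
  eapply Rle_lt_trans; [apply clamp_lipschitz|].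
  eapply Rle_lt_trans; [apply Hu; apply val_bound|].
  assert (Hdd : d * (2 * L + 1) = eps) by (unfold d; field; lra).
  pose proof (Rabs_pos (val s' - val s)). pose proof (Rabs_pos (val t' - val t)). nra.
Qed.

Lemma lipschitz2_interp u v Lu Lv M :
  lipschitz1 u Lu -> lipschitz1 v Lv -> 0 <= M ->
  (forall s, 0 <= s <= 1 -> Rabs (u s) <= M /\ Rabs (v s) <= M) ->
  lipschitz2 (fun s t => (1 - t) * u s + t * v s) (2 * Lu + Lv + 2 * M).
Proof.
  intros [HLu Hu] [HLv Hv] HM Hbound. split; [lra|].
  intros s t s' t' Hs Hs' Ht Ht'.
  replace ((1 - t') * u s' + t' * v s' - ((1 - t) * u s + t * v s)) with
    ((u s' - u s) + t' * ((v s' - v s) - (u s' - u s)) + (t' - t) * (v s - u s)) by ring.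
  pose proof (Hu s s' Hs Hs'). pose proof (Hv s s' Hs Hs').
  destruct (Hbound s Hs) as [Bu Bv].
  pose proof (Rabs_pos (s' - s)). pose proof (Rabs_pos (t' - t)).
  pose proof (Rabs_triang (u s' - u s + t' * (v s' - v s - (u s' - u s))) ((t' - t) * (v s - u s))).
  pose proof (Rabs_triang (u s' - u s) (t' * (v s' - v s - (u s' - u s)))).
  rewrite !Rabs_mult in *.
  assert (Rabs t' <= 1) by (rewrite Rabs_pos_eq; lra).
  assert (Rabs (v s' - v s - (u s' - u s)) <= Rabs (v s' - v s) + Rabs (u s' - u s)).
  { unfold Rminus at 1. eapply Rle_trans; [apply Rabs_triang|]. rewrite Rabs_Ropp. lra. }
  assert (Rabs (v s - u s) <= 2 * M).
  { unfold Rminus. eapply Rle_trans; [apply Rabs_triang|]. rewrite Rabs_Ropp. lra. }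
  pose proof (Rabs_pos t'). pose proof (Rabs_pos (v s' - v s - (u s' - u s))).
  pose proof (Rabs_pos (v s - u s)). nra.
Qed.

Ltac lipschitz_tac := split; [lra|]; intros; interval_lra.

Section Loops.
Variables (X : Type) (OX : (X -> Prop) -> Prop) (x0 : X).
Notation loop := (is_loop OX x0).
Notation hom := (homotopic OX x0).
Local Notation concat := Defs.concat.

Lemma loop_endpoint a t : loop a -> val t = 0 \/ val t = 1 -> a t = x0.
Proof.
  intros [_ [Ha0 Ha1]] [Ht|Ht]; [rewrite (val_inj t i0) | rewrite (val_inj t i1)]; auto.
Qed.

Lemma cont_reparam a u L :
  cont I_open OX a -> lipschitz1 u L -> cont I_open OX (fun t => a (clamp (u (val t)))).
Proof. intros Ha Hu. exact (cont_comp _ _ _ _ _ (cont_clamp_lipschitz1 u L Hu) Ha). Qed.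

Lemma concat_loop a b : loop a -> loop b -> loop (concat a b).
Proof.
  intros Ha Hb. split; [|split].
  - apply (cont_paste I_open OX val (1/2) (fun t => a (clamp (2 * val t)))
                      (fun t => b (clamp (2 * val t - 1)))).
    + exact I_open_topology.
    + apply I_open_val_lt.
    + apply I_open_val_gt.
    + apply (cont_reparam a (fun s => 2 * s) 2 (proj1 Ha)). lipschitz_tac.
    + apply (cont_reparam b (fun s => 2 * s - 1) 2 (proj1 Hb)). lipschitz_tac.
    + intros t Ht. rewrite (loop_endpoint a), (loop_endpoint b); auto; interval_lra.
  - unfold concat. simpl. destruct Rle_dec; [|lra]. apply loop_endpoint; auto. interval_lra.
  - unfold concat. simpl. destruct Rle_dec; [lra|]. apply loop_endpoint; auto. interval_lra.
Qed.

Lemma reverse_loop a : loop a -> loop (reverse a).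
Proof.
  intros Ha. split; [|split].
  - apply (cont_reparam a (fun s => 1 - s) 1 (proj1 Ha)). lipschitz_tac.
  - unfold reverse. apply loop_endpoint; auto. interval_lra.
  - unfold reverse. apply loop_endpoint; auto. interval_lra.
Qed.

Lemma hom_refl a : loop a -> hom a a.
Proof.
  intros Ha. exists (fun p => a (fst p)). repeat split; try apply Ha.
  exact (cont_comp _ _ _ _ _ (cont_fst _ _ I_open_topology) (proj1 Ha)).
Qed.

Lemma cont_homotopy_reparam (H : II * II -> X) f g :
  cont II2_open OX H -> cont II2_open I_open f -> cont II2_open I_open g ->
  cont II2_open OX (fun p => H (f p, g p)).
Proof.
  intros HH Hf Hg.
  exact (cont_comp _ _ _ _ _ (cont_prod_pair _ _ _ _ _ II2_open_topology Hf Hg) HH).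
Qed.

Lemma cont_clamp_fst u L :
  lipschitz1 u L -> cont II2_open I_open (fun p : II * II => clamp (u (val (fst p)))).
Proof.
  intros Hu.
  exact (cont_comp _ _ _ _ _ (cont_fst _ _ I_open_topology) (cont_clamp_lipschitz1 u L Hu)).
Qed.

Lemma cont_clamp_snd u L :
  lipschitz1 u L -> cont II2_open I_open (fun p : II * II => clamp (u (val (snd p)))).
Proof.
  intros Hu.
  exact (cont_comp _ _ _ _ _ (cont_snd _ _ I_open_topology) (cont_clamp_lipschitz1 u L Hu)).
Qed.

Lemma hom_sym a b : hom a b -> hom b a.
Proof.
  intros [H [Hc [H0 [H1 Hend]]]].
  exists (fun p => H (fst p, clamp (1 - val (snd p)))). repeat split.
  - apply cont_homotopy_reparam; auto.
    + apply cont_fst, I_open_topology.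
    + apply (cont_clamp_snd (fun t => 1 - t) 1). lipschitz_tac.
  - intros s. rewrite <- H1. do 2 f_equal. apply val_inj. interval_lra.
  - intros s. rewrite <- H0. do 2 f_equal. apply val_inj. interval_lra.
  - apply Hend.
  - apply Hend.
Qed.

Lemma hom_trans a b c : hom a b -> hom b c -> hom a c.
Proof.
  intros [H [Hc [H0 [H1 Hend]]]] [K [Kc [K0 [K1 Kend]]]].
  exists (fun p => if Rle_dec (val (snd p)) (1/2) then H (fst p, clamp (2 * val (snd p)))
                  else K (fst p, clamp (2 * val (snd p) - 1))).
  repeat split.
  - apply (cont_paste _ _ (fun p => val (snd p)) (1/2)
             (fun p => H (fst p, clamp (2 * val (snd p))))
             (fun p => K (fst p, clamp (2 * val (snd p) - 1)))).
    + exact II2_open_topology.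
    + exact (cont_snd _ _ I_open_topology _ (I_open_val_lt (1/2))).
    + exact (cont_snd _ _ I_open_topology _ (I_open_val_gt (1/2))).
    + apply cont_homotopy_reparam; auto; [apply cont_fst, I_open_topology|].
      apply (cont_clamp_snd (fun t => 2 * t) 2). lipschitz_tac.
    + apply cont_homotopy_reparam; auto; [apply cont_fst, I_open_topology|].
      apply (cont_clamp_snd (fun t => 2 * t - 1) 2). lipschitz_tac.
    + intros [s t] Ht. simpl in *.
      replace (clamp (2 * val t)) with i1 by (apply val_inj; interval_lra).
      replace (clamp (2 * val t - 1)) with i0 by (apply val_inj; interval_lra).
      rewrite H1, K0. reflexivity.
  - intros s. simpl. destruct Rle_dec; [|interval_lra].
    rewrite <- H0. do 2 f_equal. apply val_inj. interval_lra.
  - intros s. simpl. destruct Rle_dec; [interval_lra|].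
    rewrite <- K1. do 2 f_equal. apply val_inj. interval_lra.
  - simpl. destruct Rle_dec; [apply Hend | apply Kend].
  - simpl. destruct Rle_dec; [apply Hend | apply Kend].
Qed.

Lemma hom_concat a a' b b' : hom a a' -> hom b b' -> hom (concat a b) (concat a' b').
Proof.
  intros [H [Hc [H0 [H1 Hend]]]] [K [Kc [K0 [K1 Kend]]]].
  exists (fun p => if Rle_dec (val (fst p)) (1/2) then H (clamp (2 * val (fst p)), snd p)
                  else K (clamp (2 * val (fst p) - 1), snd p)).
  repeat split.
  - apply (cont_paste _ _ (fun p => val (fst p)) (1/2)
             (fun p => H (clamp (2 * val (fst p)), snd p))
             (fun p => K (clamp (2 * val (fst p) - 1), snd p))).
    + exact II2_open_topology.
    + exact (cont_fst _ _ I_open_topology _ (I_open_val_lt (1/2))).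
    + exact (cont_fst _ _ I_open_topology _ (I_open_val_gt (1/2))).
    + apply cont_homotopy_reparam; auto; [|apply cont_snd, I_open_topology].
      apply (cont_clamp_fst (fun s => 2 * s) 2). lipschitz_tac.
    + apply cont_homotopy_reparam; auto; [|apply cont_snd, I_open_topology].
      apply (cont_clamp_fst (fun s => 2 * s - 1) 2). lipschitz_tac.
    + intros [s t] Hs. simpl in *.
      replace (clamp (2 * val s)) with i1 by (apply val_inj; interval_lra).
      replace (clamp (2 * val s - 1)) with i0 by (apply val_inj; interval_lra).
      rewrite (proj2 (Hend t)), (proj1 (Kend t)). reflexivity.
  - intros s. simpl. unfold concat. destruct Rle_dec; auto.
  - intros s. simpl. unfold concat. destruct Rle_dec; auto.
  - simpl. destruct Rle_dec; [|interval_lra].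
    replace (clamp (2 * 0)) with i0 by (apply val_inj; interval_lra). apply Hend.
  - simpl. destruct Rle_dec; [interval_lra|].
    replace (clamp (2 * 1 - 1)) with i1 by (apply val_inj; interval_lra). apply Kend.
Qed.

Lemma hom_ext a b a' b' :
  hom a b -> (forall s, a s = a' s) -> (forall s, b s = b' s) -> hom a' b'.
Proof.
  intros Hab Ha Hb. replace a' with a by (apply functional_extensionality; auto).
  replace b' with b by (apply functional_extensionality; auto). exact Hab.
Qed.

Lemma hom_lipschitz_reparam d Phi L : loop d -> lipschitz2 Phi L ->
  (forall t, 0 <= t <= 1 -> d (clamp (Phi 0 t)) = x0 /\ d (clamp (Phi 1 t)) = x0) ->
  hom (fun s => d (clamp (Phi (val s) 0))) (fun s => d (clamp (Phi (val s) 1))).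
Proof.
  intros Hd HPhi Hend. exists (fun p => d (clamp (Phi (val (fst p)) (val (snd p))))).
  repeat split; try (apply Hend, val_bound).
  exact (cont_comp _ _ _ _ _ (cont_clamp_lipschitz2 Phi L HPhi) (proj1 Hd)).
Qed.

(* Straight-line homotopy between the parameter functions [u] and [v]. *)
Lemma hom_reparam d u v Lu Lv M : loop d -> lipschitz1 u Lu -> lipschitz1 v Lv -> 0 <= M ->
  (forall s, 0 <= s <= 1 -> Rabs (u s) <= M /\ Rabs (v s) <= M) ->
  u 0 = v 0 -> u 1 = v 1 -> (u 0 = 0 \/ u 0 = 1) -> (u 1 = 0 \/ u 1 = 1) ->
  hom (fun s => d (clamp (u (val s)))) (fun s => d (clamp (v (val s)))).
Proof.
  intros Hd Hu Hv HM Hbound E0 E1 F0 F1.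
  eapply hom_ext.
  - apply (hom_lipschitz_reparam d (fun s t => (1 - t) * u s + t * v s) _ Hd
             (lipschitz2_interp u v Lu Lv M Hu Hv HM Hbound)).
    intros t Ht. rewrite <- E0, <- E1.
    replace ((1 - t) * u 0 + t * u 0) with (u 0) by ring.
    replace ((1 - t) * u 1 + t * u 1) with (u 1) by ring.
    split; apply loop_endpoint; auto; interval_lra.
  - intros s. simpl. do 3 f_equal. ring.
  - intros s. simpl. do 3 f_equal. ring.
Qed.

End Loops.

Section FundamentalGroup.
Variables (X : Type) (OX : (X -> Prop) -> Prop) (x0 : X).
Notation loop := (is_loop OX x0).
Notation hom := (homotopic OX x0).
Notation pcls := (pcls OX x0).
Notation Pi1 := (Pi1 OX x0).
Local Notation concat := Defs.concat.

Lemma pcls_eq a b : loop a -> loop b -> hom a b -> pcls a = pcls b.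
Proof.
  intros Ha Hb Hab. unfold Defs.pcls.
  destruct (excluded_middle_informative (loop a)); [|contradiction].
  destruct (excluded_middle_informative (loop b)); [|contradiction].
  apply eq_sig_hprop; [intros; apply proof_irrelevance|]. simpl.
  apply functional_extensionality; intro c; apply propositional_extensionality.
  split; intros [Hc Hhom]; split; eauto using hom_trans, hom_sym.
Qed.

Lemma prep_spec (p : Pi1) : loop (prep p) /\ proj1_sig p = hcls OX x0 (prep p).
Proof.
  unfold prep. destruct (constructive_indefinite_description _ _) as [a [Ha E]]; auto.
Qed.

Lemma prep_loop (p : Pi1) : loop (prep p). Proof. apply prep_spec. Qed.

Lemma pcls_val a : loop a -> proj1_sig (pcls a) = hcls OX x0 a.
Proof.
  intros Ha. unfold Defs.pcls.
  destruct (excluded_middle_informative (loop a)); [reflexivity | contradiction].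
Qed.

Lemma pcls_prep (p : Pi1) : pcls (prep p) = p.
Proof.
  apply eq_sig_hprop; [intros; apply proof_irrelevance|].
  rewrite pcls_val; [symmetry; apply prep_spec | apply prep_loop].
Qed.

Lemma hom_prep_pcls a : loop a -> hom a (prep (pcls a)).
Proof.
  intros Ha. destruct (prep_spec (pcls a)) as [Hp E].
  assert (Hin : proj1_sig (pcls a) (prep (pcls a))).
  { rewrite E. split; auto. apply hom_refl; auto. }
  rewrite pcls_val in Hin; auto. apply Hin.
Qed.

Lemma pi1_mul_pcls a b : loop a -> loop b -> pi1_mul (pcls a) (pcls b) = pcls (concat a b).
Proof.
  intros Ha Hb. unfold pi1_mul. apply pcls_eq.
  - apply concat_loop; apply prep_loop.
  - apply concat_loop; auto.
  - apply hom_concat; apply hom_sym, hom_prep_pcls; auto.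
Qed.

Lemma pi1_mul_pcls_l (p : Pi1) b : loop b -> pi1_mul p (pcls b) = pcls (concat (prep p) b).
Proof.
  intros Hb. rewrite <- (pcls_prep p) at 1. apply pi1_mul_pcls; auto. apply prep_loop.
Qed.

Lemma pi1_mul_pcls_r a (p : Pi1) : loop a -> pi1_mul (pcls a) p = pcls (concat a (prep p)).
Proof.
  intros Ha. rewrite <- (pcls_prep p) at 1. apply pi1_mul_pcls; auto. apply prep_loop.
Qed.

(* Where the case splits of the two sides disagree, both sides are endpoint values of
   loops, hence equal to the base point. *)
Ltac loop_endpoint_eq :=
  reflexivity ||
  (apply (loop_endpoint _ OX x0); [assumption | (left; interval_lra) || (right; interval_lra)]).
Ltac pointwise_reparam s :=
  pose proof (val_bound s); cbv beta delta [concat reverse const_loop];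
  repeat match goal with |- context [Rle_dec ?x ?y] => destruct (Rle_dec x y) end;
  match goal with
  | |- ?f ?x = ?f ?y => apply f_equal; apply val_inj; interval_lra
  | |- _ => transitivity x0; [loop_endpoint_eq | symmetry; loop_endpoint_eq]
  | |- _ => exfalso; interval_lra
  end.

Lemma concat_assoc_reparam a b c s : loop a -> loop b -> loop c ->
  concat (concat a b) c s =
  concat a (concat b c) (clamp (Rmin (2 * val s) (Rmin (val s + 1/4) ((val s + 1)/2)))).
Proof. intros Ha Hb Hc. pointwise_reparam s. Qed.

Lemma concat1_reparam a s : loop a -> concat (const_loop x0) a s = a (clamp (2 * val s - 1)).
Proof. intros Ha. pointwise_reparam s. Qed.

Lemma concat_1_reparam a s : loop a -> concat a (const_loop x0) s = a (clamp (2 * val s)).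
Proof. intros Ha. pointwise_reparam s. Qed.

Lemma concat_reverse_reparam a s : loop a ->
  concat a (reverse a) s = a (clamp (Rmin (2 * val s) (2 - 2 * val s))).
Proof. intros Ha. pointwise_reparam s. Qed.

Lemma reverse_concat_reparam a s : loop a ->
  concat (reverse a) a s = a (clamp (Rmax (1 - 2 * val s) (2 * val s - 1))).
Proof. intros Ha. pointwise_reparam s. Qed.

Lemma hom_concat_assoc a b c : loop a -> loop b -> loop c ->
  hom (concat (concat a b) c) (concat a (concat b c)).
Proof.
  intros Ha Hb Hc. eapply hom_ext.
  - apply (hom_reparam X OX x0 (concat a (concat b c))
             (fun s => Rmin (2 * s) (Rmin (s + 1/4) ((s + 1)/2))) (fun s => s) 2 1 1);
      [repeat apply concat_loop; auto | lipschitz_tac | lipschitz_tac | lra | ..];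
      try intros; interval_lra.
  - intros s. symmetry. apply concat_assoc_reparam; auto.
  - intros s. simpl. rewrite clamp_val. reflexivity.
Qed.

Lemma hom_concat1 a : loop a -> hom (concat (const_loop x0) a) a.
Proof.
  intros Ha. eapply hom_ext.
  - apply (hom_reparam X OX x0 a (fun s => Rmax 0 (2 * s - 1)) (fun s => s) 2 1 1);
      [auto | lipschitz_tac | lipschitz_tac | lra | ..]; try intros; interval_lra.
  - intros s. rewrite concat1_reparam; auto. f_equal. apply val_inj. interval_lra.
  - intros s. simpl. rewrite clamp_val. reflexivity.
Qed.

Lemma hom_concat_1 a : loop a -> hom (concat a (const_loop x0)) a.
Proof.
  intros Ha. eapply hom_ext.
  - apply (hom_reparam X OX x0 a (fun s => Rmin 1 (2 * s)) (fun s => s) 2 1 1);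
      [auto | lipschitz_tac | lipschitz_tac | lra | ..]; try intros; interval_lra.
  - intros s. rewrite concat_1_reparam; auto. f_equal. apply val_inj. interval_lra.
  - intros s. simpl. rewrite clamp_val. reflexivity.
Qed.

Lemma hom_concat_reverse a : loop a -> hom (concat a (reverse a)) (const_loop x0).
Proof.
  intros Ha. eapply hom_ext.
  - apply (hom_reparam X OX x0 a (fun s => Rmin (2 * s) (2 - 2 * s)) (fun _ => 0) 2 0 2);
      [auto | lipschitz_tac | lipschitz_tac | lra | ..]; try intros; interval_lra.
  - intros s. rewrite concat_reverse_reparam; auto.
  - intros s. simpl. apply (loop_endpoint _ OX x0); auto. left. interval_lra.
Qed.

Lemma hom_reverse_concat a : loop a -> hom (concat (reverse a) a) (const_loop x0).
Proof.
  intros Ha. eapply hom_ext.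
  - apply (hom_reparam X OX x0 a (fun s => Rmax (1 - 2 * s) (2 * s - 1)) (fun _ => 1) 2 0 1);
      [auto | lipschitz_tac | lipschitz_tac | lra | ..]; try intros; interval_lra.
  - intros s. rewrite reverse_concat_reparam; auto.
  - intros s. simpl. apply (loop_endpoint _ OX x0); auto. right. interval_lra.
Qed.

Lemma pi1_group : is_group (@pi1_mul X OX x0) (@pi1_inv X OX x0) (@pi1_one X OX x0).
Proof.
  pose proof (const_loop_is_loop OX x0) as H1.
  split; [|split].
  - intros p q r.
    rewrite <- (pcls_prep p), <- (pcls_prep q), <- (pcls_prep r).
    pose proof (prep_loop p); pose proof (prep_loop q); pose proof (prep_loop r).
    rewrite !pi1_mul_pcls; auto using concat_loop.
    apply pcls_eq; auto using concat_loop. apply hom_sym, hom_concat_assoc; auto.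
  - intros p. unfold pi1_one. pose proof (prep_loop p).
    split; rewrite <- (pcls_prep p) at 2;
      [rewrite pi1_mul_pcls_r | rewrite pi1_mul_pcls_l]; auto;
      apply pcls_eq; auto using concat_loop, hom_concat1, hom_concat_1.
  - intros p. unfold pi1_inv, pi1_one. pose proof (prep_loop p).
    pose proof (reverse_loop _ OX x0 _ H).
    split; [rewrite pi1_mul_pcls_r | rewrite pi1_mul_pcls_l]; auto;
      apply pcls_eq; auto using concat_loop, hom_reverse_concat, hom_concat_reverse.
Qed.

End FundamentalGroup.

Section CompactOpen.
Variables (X : Type) (OX : (X -> Prop) -> Prop) (x0 : X).
Notation loop := (is_loop OX x0).
Notation Omega := (Omega OX x0).
Notation CO_open := (@CO_open X OX x0).
Notation qtop_open := (@qtop_open X OX x0).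
Local Notation concat := Defs.concat.

Lemma CO_open_topology : is_topology CO_open.
Proof. apply gen_open_topology. Qed.

Lemma CO_open_subbasic K U : qt_compact I_open K -> OX U ->
  CO_open (fun w : Omega => forall t, K t -> U (proj1_sig w t)).
Proof. intros HK HU. apply gen_open_base. exists K, U; auto. Qed.

Lemma compact_reparam_image K D u L : qt_compact I_open K -> I_open D -> lipschitz1 u L ->
  qt_compact I_open (fun s => exists t, (K t /\ ~ D t) /\ s = clamp (u (val t))).
Proof.
  intros HK HD Hu. apply (compact_image I_open I_open); [|exact (cont_clamp_lipschitz1 u L Hu)].
  apply compact_inter_closed; auto.
Qed.

Definition concat_left (a : II -> X) (Ha : loop a) (w : Omega) : Omega :=
  exist _ (concat a (proj1_sig w)) (concat_loop X OX x0 _ _ Ha (proj2_sig w)).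

Definition concat_right (a : II -> X) (Ha : loop a) (w : Omega) : Omega :=
  exist _ (concat (proj1_sig w) a) (concat_loop X OX x0 _ _ (proj2_sig w) Ha).

(* The preimage of [{w | w(K) <= U}] is [{w | w(2 K' - 1) <= U}] with [K'] the part of [K]
   in [[1/2, 1]], or empty when [a] maps the rest of [K] outside [U]. *)
Lemma cont_concat_left a (Ha : loop a) : cont CO_open CO_open (concat_left a Ha).
Proof.
  apply cont_gen_open; [apply CO_open_topology|].
  intros V [K [U [HK [HU ->]]]]. simpl.
  destruct (classic (forall t, K t -> val t <= 1/2 -> U (a (clamp (2 * val t)))))
    as [Ha_in|Ha_out].
  - eapply open_ext; [|apply (CO_open_subbasic (fun s => exists t,
        (K t /\ ~ val t < 1/2) /\ s = clamp (2 * val t - 1)) U); auto].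
    + intros w. split.
      * intros Hw t Kt. unfold concat.
        destruct (Rle_dec (proj1_sig t) (1/2)) as [Hle|Hgt]; [apply Ha_in; auto|].
        apply Hw. exists t. split; auto. split; auto. unfold val; lra.
      * intros Hw s [t [[Kt Ht] ->]]. specialize (Hw t Kt). unfold concat in Hw.
        destruct (Rle_dec (proj1_sig t) (1/2)) as [Hle|Hgt]; [|exact Hw].
        rewrite (loop_endpoint _ OX x0 (proj1_sig w));
          [| apply (proj2_sig w) | left; interval_lra].
        rewrite (loop_endpoint _ OX x0 a) in Hw; auto. right; interval_lra.
    + apply (compact_reparam_image K _ (fun s => 2 * s - 1) 2 HK (I_open_val_lt (1/2))).
      lipschitz_tac.
  - eapply open_ext; [|apply (open_empty _ CO_open_topology)].
    intros w; split; [contradiction|]. intros Hw. apply Ha_out. intros t Kt Ht.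
    specialize (Hw t Kt). simpl in Hw. unfold concat in Hw.
    destruct (Rle_dec (proj1_sig t) (1/2)); [auto | unfold val in Ht; lra].
Qed.

Lemma cont_concat_right a (Ha : loop a) : cont CO_open CO_open (concat_right a Ha).
Proof.
  apply cont_gen_open; [apply CO_open_topology|].
  intros V [K [U [HK [HU ->]]]]. simpl.
  destruct (classic (forall t, K t -> 1/2 <= val t -> U (a (clamp (2 * val t - 1)))))
    as [Ha_in|Ha_out].
  - eapply open_ext; [|apply (CO_open_subbasic (fun s => exists t,
        (K t /\ ~ 1/2 < val t) /\ s = clamp (2 * val t)) U); auto].
    + intros w. split.
      * intros Hw t Kt. unfold concat.
        destruct (Rle_dec (proj1_sig t) (1/2)) as [Hle|Hgt].
        -- apply Hw. exists t. split; auto. split; auto. unfold val; lra.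
        -- apply Ha_in; auto. unfold val; lra.
      * intros Hw s [t [[Kt Ht] ->]]. specialize (Hw t Kt). unfold concat in Hw.
        destruct (Rle_dec (proj1_sig t) (1/2)) as [Hle|Hgt]; [exact Hw|].
        unfold val in Ht; lra.
    + apply (compact_reparam_image K _ (fun s => 2 * s) 2 HK (I_open_val_gt (1/2))).
      lipschitz_tac.
  - eapply open_ext; [|apply (open_empty _ CO_open_topology)].
    intros w; split; [contradiction|]. intros Hw. apply Ha_out. intros t Kt Ht.
    specialize (Hw t Kt). simpl in Hw. unfold concat in Hw.
    destruct (Rle_dec (proj1_sig t) (1/2)) as [Hle|Hgt]; [|exact Hw].
    rewrite (loop_endpoint _ OX x0 (proj1_sig w)) in Hw;
      [| apply (proj2_sig w) | right; interval_lra].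
    rewrite (loop_endpoint _ OX x0 a); auto. left; interval_lra.
Qed.

Lemma qtop_open_topology : is_topology qtop_open.
Proof.
  exact (preimage_topology _ (fun w : Omega => pcls OX x0 (proj1_sig w)) CO_open_topology).
Qed.

Lemma qtop_cont_mull p : cont qtop_open qtop_open (fun q => pi1_mul p q).
Proof.
  intros V HV. unfold qtop_open.
  eapply open_ext; [|exact (cont_concat_left (prep p) (prep_loop X OX x0 p) _ HV)].
  intros w. simpl. rewrite (pi1_mul_pcls_l X OX x0); [tauto | apply (proj2_sig w)].
Qed.

Lemma qtop_cont_mulr p : cont qtop_open qtop_open (fun q => pi1_mul q p).
Proof.
  intros V HV. unfold qtop_open.
  eapply open_ext; [|exact (cont_concat_right (prep p) (prep_loop X OX x0 p) _ HV)].
  intros w. simpl. rewrite (pi1_mul_pcls_r X OX x0); [tauto | apply (proj2_sig w)].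
Qed.

End CompactOpen.

Theorem corollary3p9 :
  (forall (G : Type) (mul : G -> G -> G) (inv : G -> G) (e : G)
          (OG : (G -> Prop) -> Prop),
      is_quasitop_group mul inv e OG ->
      forall H : G -> Prop, is_subgroup mul inv e H ->
        (OG H <-> tau_open mul inv e OG H)) /\
  (forall (X : Type) (OX : (X -> Prop) -> Prop) (x0 : X),
      is_topology OX ->
      forall H : Pi1 OX x0 -> Prop,
        is_subgroup (@pi1_mul X OX x0) (@pi1_inv X OX x0) (@pi1_one X OX x0) H ->
        (@qtop_open X OX x0 H <->
         tau_open (@pi1_mul X OX x0) (@pi1_inv X OX x0) (@pi1_one X OX x0)
                  (@qtop_open X OX x0) H)).
Proof.
  split.
  - intros G mul inv e OG [HG [HT [_ [HL HR]]]].
    exact (open_subgroupE G mul inv e HG OG HT HL HR).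
  - intros X OX x0 _.
    exact (open_subgroupE _ _ _ _ (pi1_group X OX x0) _ (qtop_open_topology X OX x0)
             (qtop_cont_mull X OX x0) (qtop_cont_mulr X OX x0)).
Qed.
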